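(* Let $p$ be a prime, $t\ge r(p)=:r$, and let $f_2,f_3\in\{0,1\}$ satisfy $w_2(p^t)\le f_2$ and $w_3(p^t)\le f_3$. Let $c,d\in\mathbb{Z}$. (i) If $p^{t-r+2}\nmid c$ and $p^{t-r+2}\nmid d$, then $E_{f_2,f_3}(c,d;p^t)\ne0$ implies $(c,p^t)=p^s=(d,p^t)$ for some $s$, and in this case $E_{f_2,f_3}(c,d;p^t)=p^sE_{f_2,f_3}(c/p^s,d/p^s;p^{t-s})$. (ii) If $p^{t-r+2}\mid c$ or $p^{t-r+2}\mid d$, then $E_{f_2,f_3}(c,d;p^t)\ne0$ implies $p^{t-r+1}\mid \gcd(c,d)$, and in this case $E_{f_2,f_3}(c,d;p^t)=p^{t-r+1}E_{f_2,f_3}\big(c/p^{t-r+1},d/p^{t-r+1};p^{r-1}\big)$.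
   Context: For $c,d\in\mathbb{Z}$, $q\in\mathbb{N}$: $E(c,d;q)=\sum^*_{z\bmod q}e\big(\frac{cz^3-dz^2}{q}\big)$ (sum over $z$ coprime to $q$, $e(x)=\exp(2\pi ix)$), and $E_{f_2,f_3}(c,d;q)=E(2^{f_2}c,3^{f_3}d;q)$. Also $w_2(q)=1$ if $4\mid q$ and $0$ otherwise; $w_3(q)=1$ if $9\mid q$ and $0$ otherwise. $r(2)=6$, $r(3)=5$, and $r(p)=2$ for primes $p>3$. *)

From Stdlib Require Import Reals ZArith Znumtheory List.
Open Scope R_scope.

(* a complex number x + i y is the pair (x, y) *)
Definition Cnum := (R * R)%type.
Definition C0 : Cnum := (0, 0).
Definition Cadd (u v : Cnum) : Cnum := (fst u + fst v, snd u + snd v).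
Definition Cscale (a : R) (u : Cnum) : Cnum := (a * fst u, a * snd u).

(* e(a/q) = exp(2 pi i a / q) *)
Definition e_frac (a q : Z) : Cnum :=
  (cos (2 * PI * IZR a / IZR q), sin (2 * PI * IZR a / IZR q)).

Definition E (c d q : Z) : Cnum :=
  fold_right Cadd C0
    (map (fun n : nat => let z := Z.of_nat n in
            if Z.eqb (Z.gcd z q) 1
            then e_frac (c * z ^ 3 - d * z ^ 2) q else C0)
         (seq 0 (Z.to_nat q))).

Definition Ef (f2 f3 c d q : Z) : Cnum := E (2 ^ f2 * c) (3 ^ f3 * d) q.

Definition w2 (q : Z) : Z := if Z.eqb (q mod 4) 0 then 1 else 0.
Definition w3 (q : Z) : Z := if Z.eqb (q mod 9) 0 then 1 else 0.

Definition rp (p : Z) : Z := if Z.eqb p 2 then 6 else if Z.eqb p 3 then 5 else 2.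

From Stdlib Require Import Reals ZArith Znumtheory Zpow_facts List Lia Lra.
Open Scope R_scope.

(* If [p^k] divides [c] and [d], the phase is periodic modulo [p^(t-k)] after dividing out
   [p^k], so [E] collapses to [p^k] copies of the sum modulo [p^(t-k)].  Suppose instead that
   exactly one of [c], [d] is divisible by [p] and [t >= r(p)].  Write [3 C = p^e a] and
   [2 D = p^e b] for [C = 2^f2 c], [D = 3^f3 d], with [e = 1] for [p = 2, 3] and [e = 0]
   otherwise; exactly one of [a], [b] is divisible by [p].  Shifting a unit [u] by [p^(t-1-e) y]
   changes the phase by [y u (a u - b) / p] modulo [1], with [u (a u - b)] prime to [p], so the
   sum over [y] is a complete geometric sum of a nontrivial [p]-th root of unity and [E]
   vanishes.  Applied after the collapse, this shows that a nonzero sum forces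
   [p^k | c <-> p^k | d] for all [k <= t - r + 1], from which both parts follow. *)

Definition Cmul (u v : Cnum) : Cnum :=
  (fst u * fst v - snd u * snd v, fst u * snd v + snd u * fst v).

Definition Ssum (f : nat -> Cnum) (n : nat) : Cnum :=
  fold_right Cadd C0 (map f (seq 0 n)).

Ltac Cring := unfold Cadd, Cscale, Cmul, C0; apply injective_projections; simpl; ring.

Lemma fold_right_Cadd_app (l1 l2 : list Cnum) :
  fold_right Cadd C0 (l1 ++ l2) = Cadd (fold_right Cadd C0 l1) (fold_right Cadd C0 l2).
Proof.
  induction l1 as [|a l IH]; simpl.
  - destruct (fold_right Cadd C0 l2); Cring.
  - rewrite IH. destruct a, (fold_right Cadd C0 l), (fold_right Cadd C0 l2). Cring.
Qed.

Lemma Ssum_S f n : Ssum f (S n) = Cadd (Ssum f n) (f n).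
Proof.
  unfold Ssum. rewrite seq_S, map_app, fold_right_Cadd_app. simpl.
  destruct (f n), (fold_right Cadd C0 (map f (seq 0 n))). Cring.
Qed.

Lemma Ssum_ext f g n : (forall k, (k < n)%nat -> f k = g k) -> Ssum f n = Ssum g n.
Proof.
  induction n as [|n IH]; intros H; auto.
  rewrite !Ssum_S, IH by (intros; apply H; lia). now rewrite H by lia.
Qed.

Lemma Ssum_zero f n : (forall k, (k < n)%nat -> f k = C0) -> Ssum f n = C0.
Proof.
  induction n as [|n IH]; intros H; auto.
  rewrite Ssum_S, IH by (intros; apply H; lia). rewrite H by lia. Cring.
Qed.

Lemma Ssum_add f g n : Ssum (fun k => Cadd (f k) (g k)) n = Cadd (Ssum f n) (Ssum g n).
Proof.
  induction n as [|n IH]. { Cring. }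
  rewrite !Ssum_S, IH. destruct (Ssum f n), (Ssum g n), (f n), (g n). Cring.
Qed.

Lemma Ssum_const v n : Ssum (fun _ => v) n = Cscale (INR n) v.
Proof.
  induction n as [|n IH]. { destruct v; Cring. }
  rewrite Ssum_S, IH, S_INR. destruct v; Cring.
Qed.

Lemma Ssum_mul_l w f n : Ssum (fun k => Cmul w (f k)) n = Cmul w (Ssum f n).
Proof.
  induction n as [|n IH]. { destruct w; Cring. }
  rewrite !Ssum_S, IH. destruct w, (Ssum f n), (f n). Cring.
Qed.

Lemma Ssum_swap (F : nat -> nat -> Cnum) n m :
  Ssum (fun i => Ssum (fun j => F i j) m) n = Ssum (fun j => Ssum (fun i => F i j) n) m.
Proof.
  induction n as [|n IH].
  - symmetry. apply Ssum_zero. reflexivity.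
  - rewrite Ssum_S, IH, <- Ssum_add. apply Ssum_ext. intros. now rewrite Ssum_S.
Qed.

Lemma Ssum_split f a b : Ssum f (a + b) = Cadd (Ssum f a) (Ssum (fun i => f (a + i)%nat) b).
Proof.
  induction b as [|b IH]. { rewrite Nat.add_0_r. destruct (Ssum f a); Cring. }
  rewrite Nat.add_succ_r, !Ssum_S, IH.
  destruct (Ssum f a), (Ssum (fun i => f (a + i)%nat) b), (f (a + b)%nat). Cring.
Qed.

Lemma Ssum_block f n m :
  Ssum f (m * n) = Ssum (fun j => Ssum (fun i => f (j * n + i)%nat) n) m.
Proof.
  induction m as [|m IH]. { reflexivity. }
  rewrite Ssum_S, <- IH. replace (S m * n)%nat with (m * n + n)%nat by lia.
  apply Ssum_split.
Qed.

Lemma e_frac_add a b q : e_frac (a + b) q = Cmul (e_frac a q) (e_frac b q).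
Proof.
  unfold e_frac, Cmul; simpl. rewrite plus_IZR.
  replace (2 * PI * (IZR a + IZR b) / IZR q)
    with (2 * PI * IZR a / IZR q + 2 * PI * IZR b / IZR q) by (unfold Rdiv; ring).
  rewrite cos_plus, sin_plus. f_equal; ring.
Qed.

Lemma cos_sin_add_2PI_mul x k :
  cos (x + 2 * PI * IZR k) = cos x /\ sin (x + 2 * PI * IZR k) = sin x.
Proof.
  destruct (Z_le_gt_dec 0 k) as [Hk|Hk].
  - rewrite <- (Z2Nat.id k Hk), <- INR_IZR_INZ.
    replace (x + 2 * PI * INR (Z.to_nat k)) with (x + 2 * INR (Z.to_nat k) * PI) by ring.
    split; [apply cos_period | apply sin_period].
  - set (y := x + 2 * PI * IZR k).
    assert (Hx : x = y + 2 * INR (Z.to_nat (- k)) * PI).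
    { unfold y. rewrite INR_IZR_INZ, Z2Nat.id, opp_IZR by lia. ring. }
    rewrite Hx, cos_period, sin_period. auto.
Qed.

Lemma e_frac_congr a b q : q <> 0%Z -> (q | a - b)%Z -> e_frac a q = e_frac b q.
Proof.
  intros Hq [k Hk]. unfold e_frac.
  replace (2 * PI * IZR a / IZR q) with (2 * PI * IZR b / IZR q + 2 * PI * IZR k).
  2:{ replace a with (b + k * q)%Z by lia. rewrite plus_IZR, mult_IZR.
      field. now apply not_0_IZR. }
  now destruct (cos_sin_add_2PI_mul (2 * PI * IZR b / IZR q) k) as [-> ->].
Qed.

Lemma e_frac_scale m a q : m <> 0%Z -> q <> 0%Z -> e_frac (m * a) (m * q) = e_frac a q.
Proof.
  intros Hm Hq. unfold e_frac. rewrite !mult_IZR.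
  replace (2 * PI * (IZR m * IZR a) / (IZR m * IZR q)) with (2 * PI * IZR a / IZR q); auto.
  field. split; now apply not_0_IZR.
Qed.

Lemma e_frac_0 q : e_frac 0 q = (1, 0).
Proof.
  unfold e_frac. replace (2 * PI * IZR 0 / IZR q) with 0 by (simpl; unfold Rdiv; ring).
  now rewrite cos_0, sin_0.
Qed.

Lemma e_frac_eq_1_divide L q : q <> 0%Z -> e_frac L q = (1, 0) -> (q | L)%Z.
Proof.
  intros Hq H. injection H as Hc Hs.
  set (x := 2 * PI * IZR L / IZR q) in *.
  assert (Hs2 : sin (x / 2) = 0).
  { assert (H2 := cos_2a_sin (x / 2)). replace (2 * (x / 2)) with x in H2 by field. nra. }
  destruct (sin_eq_0_0 _ Hs2) as [k Hk].
  exists k. apply eq_IZR. rewrite mult_IZR.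
  assert (HPI := PI_RGT_0). assert (Hq' : IZR q <> 0) by now apply not_0_IZR.
  unfold x in Hk.
  apply (Rmult_eq_reg_l PI); [|lra].
  apply (Rmult_eq_reg_r (/ IZR q)); [|now apply Rinv_neq_0_compat].
  replace (PI * IZR L * / IZR q) with (2 * PI * IZR L / IZR q / 2) by now field.
  rewrite Hk. now field.
Qed.

Lemma Cmul_fixed_eq_C0 s w : Cmul s w = s -> w <> (1, 0) -> s = C0.
Proof.
  destruct s as [s1 s2], w as [w1 w2]; unfold Cmul, C0; simpl.
  intros H Hw. injection H as H1 H2.
  assert (Hn : (w1 - 1) * (w1 - 1) + w2 * w2 <> 0).
  { intro H0. apply Hw. destruct (Rplus_sqr_eq_0 _ _ H0). f_equal; lra. }
  assert (E1 : s1 * ((w1 - 1) * (w1 - 1) + w2 * w2) = 0).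
  { transitivity ((w1 - 1) * (s1 * w1 - s2 * w2 - s1) + w2 * (s1 * w2 + s2 * w1 - s2));
      [ring | rewrite H1, H2; ring]. }
  assert (E2 : s2 * ((w1 - 1) * (w1 - 1) + w2 * w2) = 0).
  { transitivity (- w2 * (s1 * w1 - s2 * w2 - s1) + (w1 - 1) * (s1 * w2 + s2 * w1 - s2));
      [ring | rewrite H1, H2; ring]. }
  f_equal; [destruct (Rmult_integral _ _ E1) | destruct (Rmult_integral _ _ E2)]; tauto.
Qed.

(* [S_n w + 1 = S_n + w^n] for the partial sums [S_n] of the geometric series in [w = e(L/q)]. *)
Lemma Ssum_e_frac_geometric q L N : q <> 0%Z -> ~ (q | L)%Z -> (q | Z.of_nat N)%Z ->
  Ssum (fun y => e_frac (Z.of_nat y * L) q) N = C0.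
Proof.
  intros Hq HL HN. set (f := fun y : nat => e_frac (Z.of_nat y * L) q).
  set (w := e_frac L q).
  assert (Htel : forall n, Cadd (Cmul (Ssum f n) w) (1, 0) = Cadd (Ssum f n) (f n)).
  { induction n as [|n IH].
    - unfold f; simpl. rewrite e_frac_0. destruct w; Cring.
    - assert (Hf : f (S n) = Cmul (f n) w).
      { unfold f, w. rewrite <- e_frac_add. f_equal. lia. }
      rewrite Ssum_S, Hf.
      transitivity (Cadd (Cadd (Cmul (Ssum f n) w) (1, 0)) (Cmul (f n) w)).
      { destruct (Ssum f n), (f n), w. Cring. }
      rewrite IH. destruct (Ssum f n), (f n), w. Cring. }
  assert (HfN : f N = (1, 0)).
  { unfold f. rewrite <- (e_frac_0 q). apply e_frac_congr; auto.
    rewrite Z.sub_0_r. now apply Z.divide_mul_l. }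
  specialize (Htel N). rewrite HfN in Htel.
  apply (Cmul_fixed_eq_C0 _ w).
  - destruct (Cmul (Ssum f N) w), (Ssum f N). unfold Cadd in Htel; simpl in Htel.
    injection Htel as H1 H2. f_equal; lra.
  - intro Hw. now apply HL, e_frac_eq_1_divide.
Qed.

Lemma pow_divide_weaken p a b x : (0 <= a <= b)%Z -> (p ^ b | x)%Z -> (p ^ a | x)%Z.
Proof.
  intros Hab H. apply Z.divide_trans with (p ^ b)%Z; auto.
  exists (p ^ (b - a))%Z. rewrite <- Z.pow_add_r by lia. f_equal; ring.
Qed.

Lemma prime_divide_pow p n : (1 <= n)%Z -> (p | p ^ n)%Z.
Proof.
  intros Hn. rewrite <- (Z.pow_1_r p) at 1.
  apply (pow_divide_weaken p 1 n); [lia | apply Z.divide_refl].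
Qed.

Lemma gcd_pow_eq_1_iff p t z : prime p -> (1 <= t)%Z ->
  (Z.gcd z (p ^ t) = 1%Z <-> ~ (p | z)%Z).
Proof.
  intros Hp Ht. assert (Hp2 := prime_ge_2 p Hp). split.
  - intros H Hd. assert (Hd2 : (p | Z.gcd z (p ^ t))%Z).
    { apply Z.gcd_greatest; auto. now apply prime_divide_pow. }
    rewrite H in Hd2. apply Z.divide_pos_le in Hd2; lia.
  - intros H. apply Zgcd_1_rel_prime, rel_prime_Zpower_r; [lia|].
    now apply rel_prime_sym, prime_rel_prime.
Qed.

Lemma gcd_pow_eqb_congr p t t' z z' : prime p -> (1 <= t)%Z -> (1 <= t')%Z -> (p | z - z')%Z ->
  (Z.gcd z (p ^ t) =? 1)%Z = (Z.gcd z' (p ^ t') =? 1)%Z.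
Proof.
  intros Hp Ht Ht' Hzz. apply Bool.eq_iff_eq_true.
  rewrite !Z.eqb_eq, !gcd_pow_eq_1_iff by auto.
  assert ((p | z)%Z <-> (p | z')%Z).
  { split; intro H.
    - replace z' with (z - (z - z'))%Z by ring. now apply Z.divide_sub_r.
    - replace z with (z - z' + z')%Z by ring. now apply Z.divide_add_r. }
  tauto.
Qed.

Lemma prime_divide_mul_iff p u a : prime p -> ~ (p | u)%Z -> ((p | u * a)%Z <-> (p | a)%Z).
Proof.
  intros Hp Hu. split; [|apply Z.divide_mul_r].
  intro H. destruct (prime_mult p Hp u a H); tauto.
Qed.

Lemma prime_not_divide_prime p q : prime p -> prime q -> p <> q -> ~ (p | q)%Z.
Proof. intros Hp Hq Hpq H. exact (Hpq (prime_div_prime p q Hp Hq H)). Qed.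

Lemma prime_not_divide_prime_pow p q n : prime p -> prime q -> p <> q -> (0 <= n)%Z ->
  ~ (p | q ^ n)%Z.
Proof. intros Hp Hq Hpq Hn H. exact (Hpq (prime_power_prime p q n Hn Hp Hq H)). Qed.

Definition exactly_one_divides (p a b : Z) : Prop :=
  (~ (p | a) /\ (p | b))%Z \/ ((p | a) /\ ~ (p | b))%Z.

Lemma exactly_one_divides_mul p u v a b : prime p -> ~ (p | u)%Z -> ~ (p | v)%Z ->
  exactly_one_divides p a b -> exactly_one_divides p (u * a) (v * b).
Proof. intros Hp Hu Hv. unfold exactly_one_divides. now rewrite !prime_divide_mul_iff. Qed.

Lemma exactly_one_divides_not_divide p a b z : prime p -> ~ (p | z)%Z ->
  exactly_one_divides p a b -> ~ (p | a * z - b)%Z.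
Proof.
  intros Hp Hz [[Ha Hb] | [Ha Hb]] H.
  - assert (Haz : (p | a * z)%Z).
    { replace (a * z)%Z with (a * z - b + b)%Z by ring. now apply Z.divide_add_r. }
    destruct (prime_mult p Hp a z Haz); tauto.
  - apply Hb. replace b with (a * z - (a * z - b))%Z by ring.
    now apply Z.divide_sub_r; [apply Z.divide_mul_l|].
Qed.

Definition phi (C D z : Z) : Z := (C * z ^ 3 - D * z ^ 2)%Z.

Definition summand (C D Q z : Z) : Cnum :=
  if (Z.gcd z Q =? 1)%Z then e_frac (phi C D z) Q else C0.

Lemma E_as_Ssum C D Q : E C D Q = Ssum (fun n => summand C D Q (Z.of_nat n)) (Z.to_nat Q).
Proof. reflexivity. Qed.

Lemma phi_add_mul C D z k Q : (Q | phi C D (z + k * Q) - phi C D z)%Z.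
Proof.
  exists (3 * C * z ^ 2 * k + 3 * C * z * k ^ 2 * Q + C * k ^ 3 * Q ^ 2
          - 2 * D * z * k - D * k ^ 2 * Q)%Z.
  unfold phi. ring.
Qed.

(* Taylor expansion of [phi] at [z] with step [h = p^j y], [j = t - 1 - e]: the linear term is
   [p^(t-1) y z (a z - b)] and [p^t] divides [h^2]. *)
Lemma phi_shift p e t C D a b z y : (0 <= e)%Z -> (2 * e + 2 <= t)%Z ->
  (3 * C = p ^ e * a)%Z -> (2 * D = p ^ e * b)%Z ->
  (p ^ t | phi C D (z + p ^ (t - 1 - e) * y) - (phi C D z + p ^ (t - 1) * (y * (z * (a * z - b)))))%Z.
Proof.
  intros He Ht HC HD.
  set (J := (p ^ (t - 1 - e))%Z). set (P := (p ^ e)%Z). set (K := (p ^ (t - 2 - 2 * e))%Z).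
  assert (HJP : (p ^ (t - 1) = J * P)%Z).
  { unfold J, P. rewrite <- Z.pow_add_r by lia. f_equal; ring. }
  assert (HK : (K * p ^ t = J * J)%Z).
  { unfold K, J. rewrite <- !Z.pow_add_r by lia. f_equal; ring. }
  exists ((3 * C * z - D + C * J * y) * y ^ 2 * K)%Z.
  transitivity ((3 * C * z - D + C * J * y) * y ^ 2 * (J * J)
                + J * y * z * ((3 * C - P * a) * z - (2 * D - P * b)))%Z.
  - rewrite HJP. unfold phi. ring.
  - rewrite HC, HD, <- HK. unfold P. ring.
Qed.

Lemma e_frac_phi_shift p e t C D a b z y : prime p -> (0 <= e)%Z -> (2 * e + 2 <= t)%Z ->
  (3 * C = p ^ e * a)%Z -> (2 * D = p ^ e * b)%Z ->
  e_frac (phi C D (z + p ^ (t - 1 - e) * y)) (p ^ t)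
  = Cmul (e_frac (phi C D z) (p ^ t)) (e_frac (y * (z * (a * z - b))) p).
Proof.
  intros Hp He Ht HC HD. assert (Hp2 := prime_ge_2 p Hp).
  rewrite (e_frac_congr _ (phi C D z + p ^ (t - 1) * (y * (z * (a * z - b))))).
  - rewrite e_frac_add. f_equal.
    assert (Hpt : (p ^ (t - 1) * p = p ^ t)%Z).
    { rewrite Z.mul_comm, <- Z.pow_succ_r by lia. f_equal; lia. }
    rewrite <- Hpt. apply e_frac_scale; [apply Z.pow_nonzero|]; lia.
  - apply Z.pow_nonzero; lia.
  - now apply phi_shift.
Qed.

Lemma E_mul_pow p k t C D : prime p -> (0 <= k < t)%Z ->
  E (p ^ k * C) (p ^ k * D) (p ^ t) = Cscale (IZR (p ^ k)) (E C D (p ^ (t - k))).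
Proof.
  intros Hp Hk. assert (Hp2 := prime_ge_2 p Hp).
  set (M := (p ^ k)%Z). set (Q := (p ^ (t - k))%Z).
  assert (HM : (0 < M)%Z) by (apply Z.pow_pos_nonneg; lia).
  assert (HQ : (0 < Q)%Z) by (apply Z.pow_pos_nonneg; lia).
  assert (Ht : (p ^ t = M * Q)%Z).
  { unfold M, Q. rewrite <- Z.pow_add_r by lia. f_equal; ring. }
  assert (HpQ : (p | Q)%Z) by (apply prime_divide_pow; lia).
  rewrite !E_as_Ssum, Ht, Z2Nat.inj_mul, Ssum_block by lia.
  replace (IZR M) with (INR (Z.to_nat M)) by (rewrite INR_IZR_INZ, Z2Nat.id by lia; reflexivity).
  rewrite <- Ssum_const. apply Ssum_ext; intros j _. apply Ssum_ext; intros i _.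
  rewrite Nat2Z.inj_add, Nat2Z.inj_mul, Z2Nat.id by lia.
  set (x := (Z.of_nat j * Q + Z.of_nat i)%Z).
  assert (Hunit : (Z.gcd x (p ^ t) =? 1)%Z = (Z.gcd (Z.of_nat i) Q =? 1)%Z).
  { apply gcd_pow_eqb_congr; auto; try lia.
    replace (x - Z.of_nat i)%Z with (Z.of_nat j * Q)%Z by (unfold x; ring).
    now apply Z.divide_mul_r. }
  unfold summand. rewrite <- Ht, Hunit. destruct (Z.gcd (Z.of_nat i) Q =? 1)%Z; [|reflexivity].
  replace (phi (M * C) (M * D) x) with (M * phi C D x)%Z by (unfold phi; ring).
  rewrite Ht, e_frac_scale by lia. apply e_frac_congr; [lia|].
  replace x with (Z.of_nat i + Z.of_nat j * Q)%Z by (unfold x; ring). apply phi_add_mul.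
Qed.

Lemma E_vanish p e t C D a b : prime p -> (0 <= e)%Z -> (2 * e + 2 <= t)%Z ->
  (3 * C = p ^ e * a)%Z -> (2 * D = p ^ e * b)%Z -> exactly_one_divides p a b ->
  E C D (p ^ t) = C0.
Proof.
  intros Hp He Ht HC HD Hab. assert (Hp2 := prime_ge_2 p Hp).
  set (J := (p ^ (t - 1 - e))%Z). set (Y := (p ^ (1 + e))%Z).
  assert (HJ : (0 < J)%Z) by (apply Z.pow_pos_nonneg; lia).
  assert (HY : (0 < Y)%Z) by (apply Z.pow_pos_nonneg; lia).
  assert (Hpt : (p ^ t = Y * J)%Z).
  { unfold Y, J. rewrite <- Z.pow_add_r by lia. f_equal; ring. }
  rewrite E_as_Ssum, Hpt, Z2Nat.inj_mul, Ssum_block, Ssum_swap by lia. rewrite <- Hpt.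
  apply Ssum_zero. intros u _. set (z := Z.of_nat u).
  assert (Hcongr : forall y : Z, (Z.gcd (z + J * y) (p ^ t) =? 1)%Z = (Z.gcd z (p ^ t) =? 1)%Z).
  { intros y. apply gcd_pow_eqb_congr; auto; try lia.
    replace (z + J * y - z)%Z with (J * y)%Z by ring.
    apply Z.divide_mul_l, prime_divide_pow; lia. }
  rewrite (Ssum_ext _ (fun y => summand C D (p ^ t) (z + J * Z.of_nat y))).
  2:{ intros y _. f_equal. unfold z. lia. }
  unfold summand. destruct (Z.gcd z (p ^ t) =? 1)%Z eqn:Hz.
  - transitivity (Ssum (fun y => Cmul (e_frac (phi C D z) (p ^ t))
                                      (e_frac (Z.of_nat y * (z * (a * z - b))) p)) (Z.to_nat Y)).
    { apply Ssum_ext; intros y _. rewrite Hcongr. now apply e_frac_phi_shift. }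
    assert (Hzp : ~ (p | z)%Z) by (apply (gcd_pow_eq_1_iff p t); [auto | lia | now apply Z.eqb_eq]).
    rewrite Ssum_mul_l, Ssum_e_frac_geometric.
    + destruct (e_frac (phi C D z) (p ^ t)). Cring.
    + lia.
    + intro H. destruct (prime_mult p Hp _ _ H); [auto|].
      now apply (exactly_one_divides_not_divide p a b z).
    + rewrite Z2Nat.id by lia. apply prime_divide_pow; lia.
  - apply Ssum_zero; intros y _. now rewrite Hcongr.
Qed.

Lemma rp_ge_2 p : (2 <= rp p)%Z.
Proof. unfold rp. destruct (p =? 2)%Z; [lia|]. destruct (p =? 3)%Z; lia. Qed.

(* At [p = 2] (resp. [3]) the factor [2^f2] (resp. [3^f3]) with exponent [1] makes [3 C] and
   [2 D] share the factor [p], so [E_vanish] applies with [e = 1]; for [p > 3] take [e = 0]. *)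
Lemma Ef_vanish p t f2 f3 c d : prime p -> (rp p <= t)%Z -> (0 <= f2)%Z -> (0 <= f3)%Z ->
  (p = 2 -> f2 = 1)%Z -> (p = 3 -> f3 = 1)%Z -> exactly_one_divides p c d ->
  Ef f2 f3 c d (p ^ t) = C0.
Proof.
  intros Hp Ht Hf2 Hf3 Hf2p Hf3p Hcd. unfold Ef.
  assert (H2 := prime_2). assert (H3 := prime_3).
  destruct (Z.eq_dec p 2) as [->|N2]; [|destruct (Z.eq_dec p 3) as [->|N3]].
  - rewrite (Hf2p eq_refl). unfold rp in Ht; simpl in Ht.
    apply (E_vanish 2 1 t _ _ (3 * c) (3 ^ f3 * d)); auto; try lia; try ring.
    apply exactly_one_divides_mul; auto.
    + apply prime_not_divide_prime; auto; lia.
    + apply prime_not_divide_prime_pow; auto; lia.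
  - rewrite (Hf3p eq_refl). unfold rp in Ht; simpl in Ht.
    apply (E_vanish 3 1 t _ _ (2 ^ f2 * c) (2 * d)); auto; try lia; try ring.
    apply exactly_one_divides_mul; auto.
    + apply prime_not_divide_prime_pow; auto; lia.
    + apply prime_not_divide_prime; auto; lia.
  - assert (Hr : rp p = 2%Z) by (unfold rp; rewrite (proj2 (Z.eqb_neq p 2)), (proj2 (Z.eqb_neq p 3)); auto).
    apply (E_vanish p 0 t _ _ (3 * (2 ^ f2 * c)) (2 * (3 ^ f3 * d))); auto; try lia;
      try (rewrite Z.pow_0_r; ring).
    apply exactly_one_divides_mul; try apply prime_not_divide_prime; auto.
    apply exactly_one_divides_mul; try apply prime_not_divide_prime_pow; auto.
Qed.

Lemma Ef_mul_pow p t k f2 f3 c d : prime p -> (0 <= k < t)%Z -> (p ^ k | c)%Z -> (p ^ k | d)%Z ->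
  Ef f2 f3 c d (p ^ t) = Cscale (IZR (p ^ k)) (Ef f2 f3 (c / p ^ k) (d / p ^ k) (p ^ (t - k))).
Proof.
  intros Hp Hk [qc Hc] [qd Hd]. assert (Hp2 := prime_ge_2 p Hp).
  assert (Hpk : (p ^ k <> 0)%Z) by (apply Z.pow_nonzero; lia).
  subst c d. rewrite !Z.div_mul by auto. unfold Ef.
  replace (2 ^ f2 * (qc * p ^ k))%Z with (p ^ k * (2 ^ f2 * qc))%Z by ring.
  replace (3 ^ f3 * (qd * p ^ k))%Z with (p ^ k * (3 ^ f3 * qd))%Z by ring.
  now apply E_mul_pow.
Qed.

Lemma divide_div_pow_iff p k c : prime p -> (0 <= k)%Z -> (p ^ k | c)%Z ->
  ((p | c / p ^ k)%Z <-> (p ^ (k + 1) | c)%Z).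
Proof.
  intros Hp Hk [q Hq]. assert (Hp2 := prime_ge_2 p Hp).
  assert (Hpk : (p ^ k <> 0)%Z) by (apply Z.pow_nonzero; lia).
  subst c. rewrite Z.div_mul, Z.pow_add_r, Z.pow_1_r by lia. split.
  - intros [m Hm]. exists m. subst q. ring.
  - intros [m Hm]. exists m. apply (Z.mul_reg_r _ _ (p ^ k)); auto. rewrite Hm. ring.
Qed.

Section Valuations.

Variables p f2 f3 : Z.
Hypothesis Hp : prime p.
Hypotheses (Hf2 : (0 <= f2)%Z) (Hf3 : (0 <= f3)%Z).
Hypotheses (Hf2p : p = 2%Z -> f2 = 1%Z) (Hf3p : p = 3%Z -> f3 = 1%Z).

Lemma Ef_vanish_at_level t c d k : (0 <= k <= t - rp p)%Z -> (p ^ k | c)%Z -> (p ^ k | d)%Z ->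
  exactly_one_divides (p ^ (k + 1)) c d -> Ef f2 f3 c d (p ^ t) = C0.
Proof.
  intros Hk Hc Hd Hcd. assert (Hr := rp_ge_2 p).
  rewrite (Ef_mul_pow p t k) by (auto; lia).
  rewrite (Ef_vanish p (t - k)); auto; try lia.
  - unfold Cscale, C0; simpl. f_equal; ring.
  - unfold exactly_one_divides. rewrite !divide_div_pow_iff by (auto; lia). exact Hcd.
Qed.

Lemma Ef_nonzero_divide_pow_iff t c d : Ef f2 f3 c d (p ^ t) <> C0 ->
  forall k, (0 <= k <= t - rp p + 1)%Z -> ((p ^ k | c)%Z <-> (p ^ k | d)%Z).
Proof.
  intros HE k Hk. assert (Hk0 : (0 <= k)%Z) by lia. revert Hk.
  pattern k; apply natlike_ind; [| | exact Hk0].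
  - intros _. rewrite Z.pow_0_r. split; intros; apply Z.divide_1_l.
  - intros j Hj IH Hk. rewrite <- Z.add_1_r in *. specialize (IH ltac:(lia)).
    destruct (Zdivide_dec (p ^ j) c) as [Hc|Hc].
    + assert (Hd : (p ^ j | d)%Z) by tauto.
      destruct (Zdivide_dec (p ^ (j + 1)) c), (Zdivide_dec (p ^ (j + 1)) d); try tauto;
        exfalso; apply HE, (Ef_vanish_at_level t c d j); auto; try lia;
        unfold exactly_one_divides; tauto.
    + assert (Hd : ~ (p ^ j | d)%Z) by tauto.
      split; intro H; exfalso; [apply Hc | apply Hd];
        apply (pow_divide_weaken p j (j + 1)); auto; lia.
Qed.

End Valuations.

Lemma exists_pow_valuation p n c : (0 <= n)%Z -> ~ (p ^ n | c)%Z ->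
  exists a, (0 <= a < n)%Z /\ (p ^ a | c)%Z /\ ~ (p ^ (a + 1) | c)%Z.
Proof.
  intros Hn0. pattern n. apply natlike_ind; [| | exact Hn0].
  - intros H. exfalso. apply H, Z.divide_1_l.
  - intros m Hm IH H. destruct (Zdivide_dec (p ^ m) c) as [Hd|Hd].
    + exists m. rewrite Z.add_1_r. repeat split; auto; lia.
    + destruct (IH Hd) as [a Ha]. exists a. split; [lia | apply Ha].
Qed.

Lemma gcd_pow_of_valuation p t a c : prime p -> (0 <= a <= t)%Z ->
  (p ^ a | c)%Z -> ~ (p ^ (a + 1) | c)%Z -> Z.gcd c (p ^ t) = (p ^ a)%Z.
Proof.
  intros Hp Ha [q Hq] Hn. assert (Hp2 := prime_ge_2 p Hp).
  assert (Hpq : ~ (p | q)%Z).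
  { intros [m Hm]. apply Hn. exists m. rewrite Hq, Hm, Z.pow_add_r by lia. ring. }
  replace (p ^ t)%Z with ((p ^ (t - a)) * p ^ a)%Z by (rewrite <- Z.pow_add_r by lia; f_equal; ring).
  rewrite Hq, Z.gcd_mul_mono_r_nonneg by (apply Z.pow_nonneg; lia).
  destruct (Z.eq_dec a t) as [->|Hne].
  - rewrite Z.sub_diag, Z.pow_0_r, Z.gcd_1_r. ring.
  - rewrite (proj2 (gcd_pow_eq_1_iff p (t - a) q Hp ltac:(lia)) Hpq). ring.
Qed.

Lemma w2_pow_2 t : (2 <= t)%Z -> w2 (2 ^ t) = 1%Z.
Proof.
  intros Ht. unfold w2.
  rewrite <- (Z.sub_add 2 t), Z.pow_add_r by lia.
  change (2 ^ 2)%Z with 4%Z. now rewrite Z.mod_mul.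
Qed.

Lemma w3_pow_3 t : (2 <= t)%Z -> w3 (3 ^ t) = 1%Z.
Proof.
  intros Ht. unfold w3.
  rewrite <- (Z.sub_add 2 t), Z.pow_add_r by lia.
  change (3 ^ 2)%Z with 9%Z. now rewrite Z.mod_mul.
Qed.

Close Scope R_scope.

Theorem lemma4p4 (p t f2 f3 c d : Z) :
  prime p -> (rp p <= t)%Z ->
  (f2 = 0 \/ f2 = 1)%Z -> (f3 = 0 \/ f3 = 1)%Z ->
  (w2 (p ^ t) <= f2)%Z -> (w3 (p ^ t) <= f3)%Z ->
  ( (~ (p ^ (t - rp p + 2) | c)%Z /\ ~ (p ^ (t - rp p + 2) | d)%Z) ->
    Ef f2 f3 c d (p ^ t) <> C0 ->
    exists s : Z, (0 <= s)%Z /\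
      Z.gcd c (p ^ t) = (p ^ s)%Z /\ Z.gcd d (p ^ t) = (p ^ s)%Z /\
      Ef f2 f3 c d (p ^ t)
      = Cscale (IZR (p ^ s)) (Ef f2 f3 (c / p ^ s) (d / p ^ s) (p ^ (t - s))) ) /\
  ( ((p ^ (t - rp p + 2) | c)%Z \/ (p ^ (t - rp p + 2) | d)%Z) ->
    Ef f2 f3 c d (p ^ t) <> C0 ->
    (p ^ (t - rp p + 1) | Z.gcd c d)%Z /\
    Ef f2 f3 c d (p ^ t)
    = Cscale (IZR (p ^ (t - rp p + 1)))
        (Ef f2 f3 (c / p ^ (t - rp p + 1)) (d / p ^ (t - rp p + 1)) (p ^ (rp p - 1))) ).
Proof.
  intros Hp Ht Hf2 Hf3 Hw2 Hw3. assert (Hr := rp_ge_2 p).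
  assert (Hf2p : p = 2 -> f2 = 1).
  { intros ->. unfold rp in Ht; simpl in Ht. rewrite w2_pow_2 in Hw2; lia. }
  assert (Hf3p : p = 3 -> f3 = 1).
  { intros ->. unfold rp in Ht; simpl in Ht. rewrite w3_pow_3 in Hw3; lia. }
  assert (Hiff := Ef_nonzero_divide_pow_iff p f2 f3 Hp ltac:(lia) ltac:(lia) Hf2p Hf3p t c d).
  split.
  - intros [Hc Hd] HE.
    destruct (exists_pow_valuation p (t - rp p + 2) c) as (s & Hs & Hsc & Hsc'); auto; try lia.
    assert (Hsd : (p ^ s | d)) by (apply (Hiff HE); auto; lia).
    assert (Hsd' : ~ (p ^ (s + 1) | d)).
    { destruct (Z.eq_dec s (t - rp p + 1)) as [->|Hne].
      - now replace (t - rp p + 1 + 1) with (t - rp p + 2) by ring.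
      - rewrite <- (Hiff HE); auto; lia. }
    exists s. repeat split; try lia.
    + apply gcd_pow_of_valuation; auto; lia.
    + apply gcd_pow_of_valuation; auto; lia.
    + apply Ef_mul_pow; auto; lia.
  - intros Hcd HE.
    assert (Hc : (p ^ (t - rp p + 1) | c) /\ (p ^ (t - rp p + 1) | d)).
    { rewrite <- (Hiff HE) by lia.
      destruct Hcd as [H|H]; [| rewrite (Hiff HE) by lia];
        split; apply (pow_divide_weaken p _ (t - rp p + 2)); auto; lia. }
    split.
    + apply Z.gcd_greatest; apply Hc.
    + replace (rp p - 1) with (t - (t - rp p + 1)) by ring.
      apply Ef_mul_pow; try apply Hc; auto; lia.
Qed.
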